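(* (1) If $n,m\in\mathbf N$ with $1\le m\le n$, then $$\left\langle{n\atop m}\right\rangle=\sum_{j=1}^{n-m}j\left\langle{n-j-1\atop m-1}\right\rangle^{(j+1,1)} .$$ (2) If $n,m,\nu\in\mathbf N_0$ with $0\le m\le n$ and $1\le\nu\le n-1$, then $$\left\langle{n\atop m}\right\rangle=\sum_{k=0}^{\nu}\left\langle{\nu\atop k}\right\rangle\left\langle{n-\nu\atop m-k}\right\rangle^{(\nu,k)} .$$
   Context: Euler numbers: $\left\langle{0\atop 0}\right\rangle=1$, $\left\langle{n\atop k}\right\rangle=0$ for $k<0$ or $k>n$, $\left\langle{n\atop k}\right\rangle=(n-k)\left\langle{n-1\atop k-1}\right\rangle+(k+1)\left\langle{n-1\atop k}\right\rangle$. For sequences $a=(a_j)_{j\ge1}$, $b=(b_j)_{j\ge0}$ and $\omega=(\varepsilon_1,\dots,\varepsilon_N)\in\{0,1\}^N$ let $w^{a,b}_N(\omega)=\prod_{t=1}^N g_t$ where, with $j=\#\{l<t:\varepsilon_l=0\}$, $g_t=a_{t-j}$ if $\varepsilon_t=0$ and $g_t=b_j$ if $\varepsilon_t=1$; let $\zeta_{Nk}(a,b)=\sum w^{a,b}_N(\omega)$ over $\omega$ with exactly $k$ zeros ($N\ge1$, $0\le k\le N$), $\zeta_{00}=1$, $\zeta_{Nk}=0$ if $k<0$ or $k>N$. For integers $0\le\mu\le\nu$, the associated Euler numbers of rank $(\nu,\mu)$ are $\left\langle{N\atop k}\right\rangle^{(\nu,\mu)}=\zeta_{Nk}(a,b)$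 with $a_j=\nu-\mu+j-1$ $(j\ge1)$ and $b_j=\mu+j+1$ $(j\ge0)$. *)

From mathcomp Require Import all_boot all_algebra.
Set Implicit Arguments. Unset Strict Implicit. Unset Printing Implicit Defensive.

(* Euler numbers <n k> (Eulerian numbers), k : nat.  The recurrence with
   truncated subtraction automatically gives 0 for k > n; <n -1> = 0 is
   encoded by the k = 0 case. *)
Fixpoint euler (n k : nat) : nat :=
  match n with
  | 0 => (k == 0)
  | n'.+1 =>
      (match k with 0 => 0 | k'.+1 => (n - k) * euler n' k' end)
      + k.+1 * euler n' k
  end.

(* Weight w^{a,b}_N(omega) of a 0/1 word omega, encoded as a bool sequence
   with epsilon_t = 1 <-> true.  Position t (0-indexed here, t+1 in the
   paper); j = number of zeros strictly before; g = a_{(t+1)-j} if the letter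
   is 0, and b_j if it is 1.  The sequence a is indexed from 1 (a 0 unused). *)
Definition weight (a b : nat -> nat) (w : seq bool) : nat :=
  \prod_(t < size w)
     (let j := count negb (take t w) in
      if nth true w t then b j else a (t.+1 - j)).

Definition zeta (a b : nat -> nat) (N k : nat) : nat :=
  \sum_(w : N.-tuple bool | count negb w == k) weight a b w.

Definition assoc_euler (nu mu N k : nat) : nat :=
  zeta (fun j => nu - mu + j - 1) (fun j => mu + j + 1) N k.

Definition assoc_eulerZ (nu mu N : nat) (k : int) : nat :=
  match k with Posz k' => assoc_euler nu mu N k' | Negz _ => 0 end.

From mathcomp Require Import all_boot all_algebra.
From mathcomp Require Import zify.

(* Reading the words counted by <N, m - k>^(nu,k) from their last letter gives
   Euler's recurrence for <nu + N, m> (shifted by k), so the convolution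
   sum_k <nu k> <N, m - k>^(nu,k) obeys the recurrence of <nu + N, m> in N and
   starts from <nu m> at N = 0: this is (2).  For nu = 0 it identifies <n m>
   with <n m>^(0,0), and splitting the words of the latter at their first zero
   gives (1). *)

Lemma sum_tuple_cons (T : finType) N (P : pred (seq T)) (F : seq T -> nat) :
  \sum_(w : N.+1.-tuple T | P w) F w =
  \sum_(x : T) \sum_(w : N.-tuple T | P (x :: w)) F (x :: w).
Proof.
rewrite pair_big_dep /=.
rewrite (reindex (fun w : N.+1.-tuple T => (thead w, [tuple of behead w]))) /=.
  by apply: eq_big => [w|w _]; case/tupleP: w.
exists (fun p : T * N.-tuple T => [tuple of p.1 :: p.2]).
  by move=> w _; case/tupleP: w => x t; apply: val_inj.
by move=> [x t] _; congr pair; apply: val_inj.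
Qed.

Lemma rev_tuple_inj (T : Type) N : injective (fun w : N.-tuple T => [tuple of rev w]).
Proof. by move=> s t /(congr1 val)/(congr1 rev); rewrite /= !revK => /val_inj. Qed.

Lemma sum_tuple_rcons (T : finType) N (P : pred (seq T)) (F : seq T -> nat) :
  \sum_(w : N.+1.-tuple T | P w) F w =
  \sum_(x : T) \sum_(w : N.-tuple T | P (rcons w x)) F (rcons w x).
Proof.
rewrite (reindex_inj (@rev_tuple_inj T N.+1)) /=.
rewrite (@sum_tuple_cons T N (fun s => P (rev s)) (fun s => F (rev s))).
apply: eq_bigr => x _; rewrite (reindex_inj (@rev_tuple_inj T N)) /=.
by apply: eq_big => [w|w _]; rewrite rev_cons revK.
Qed.

Section Zeta.

Implicit Types (a b : nat -> nat) (w : seq bool).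

Lemma weight_cons a b x w :
  weight a b (x :: w) =
  if x then b 0 * weight (fun i => a i.+1) b w
  else a 1 * weight a (fun i => b i.+1) w.
Proof.
rewrite /weight /= big_ord_recl /=.
have zeros_le (t : 'I_(size w)) : count negb (take t w) <= t.
  by apply: leq_trans (count_size _ _) _; rewrite size_take ltn_ord.
case: x => /=; congr (_ * _); apply: eq_bigr => t _ /=.
all: by rewrite /bump /= !add0n add1n subSn // (leq_trans (zeros_le t)).
Qed.

Lemma weight_rcons a b w x :
  weight a b (rcons w x) =
  weight a b w * (if x then b (count negb w) else a ((size w).+1 - count negb w)).
Proof.
rewrite /weight size_rcons big_ord_recr /= -cats1 takel_cat // take_size.
rewrite nth_cat ltnn subnn /=; congr (_ * _).
by apply: eq_bigr => t _; rewrite /= takel_cat ?nth_cat ?ltn_ord // ltnW.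
Qed.

Lemma eq_zeta a a' b b' N K :
  a =1 a' -> b =1 b' -> zeta a b N K = zeta a' b' N K.
Proof.
move=> eq_a eq_b; apply: eq_bigr => w _; apply: eq_bigr => t _ /=.
by case: nth.
Qed.

Lemma zeta0 a b K : zeta a b 0 K = (K == 0).
Proof.
rewrite /zeta (eq_bigl (fun _ => K == 0)) => [|w]; last by rewrite tuple0.
case: eqP => _; last by rewrite big_pred0.
rewrite (big_pred1 [tuple]) => [|w]; first by rewrite /weight big_ord0.
by rewrite [w]tuple0 /= eqxx.
Qed.

Lemma zeta_small a b N K : N < K -> zeta a b N K = 0.
Proof.
move=> ltNK; rewrite /zeta big_pred0 // => w.
have := count_size negb w; rewrite size_tuple => le_count_N.
by apply/negbTE; rewrite neq_ltn (leq_ltn_trans le_count_N ltNK).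
Qed.

Lemma zeta_cons a b N K :
  zeta a b N.+1 K =
  b 0 * zeta (fun i => a i.+1) b N K
  + (if K is K'.+1 then a 1 * zeta a (fun i => b i.+1) N K' else 0).
Proof.
rewrite /zeta (@sum_tuple_cons _ N (fun s => count negb s == K) (weight a b)).
rewrite big_bool /= big_distrr /=.
congr (_ + _); first by apply: eq_big => [w|w _]; rewrite ?add0n ?weight_cons.
case: K => [|K]; first by rewrite big_pred0 // => w; rewrite add1n.
by rewrite big_distrr; apply: eq_big => [w|w _]; rewrite ?add1n ?eqSS ?weight_cons.
Qed.

Lemma zeta_rcons a b N K :
  zeta a b N.+1 K =
  b K * zeta a b N K
  + (if K is K'.+1 then a (N.+1 - K') * zeta a b N K' else 0).
Proof.
rewrite /zeta (@sum_tuple_rcons _ N (fun s => count negb s == K) (weight a b)).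
rewrite big_bool /= !big_distrr /=.
have count_rcons w x : count negb (rcons w x) = count negb w + ~~ x.
  by rewrite -cats1 count_cat /= addn0.
congr (_ + _).
  apply: eq_big => [w|w]; rewrite count_rcons addn0 // => /eqP K_w.
  by rewrite weight_rcons K_w mulnC.
case: K => [|K]; first by rewrite big_pred0 // => w; rewrite count_rcons addn1.
rewrite big_distrr; apply: eq_big => [w|w]; rewrite count_rcons addn1 ?eqSS //.
move=> /eqP K_w.
by rewrite weight_rcons size_tuple K_w mulnC.
Qed.

End Zeta.

Lemma assoc_euler0 nu mu K : assoc_euler nu mu 0 K = (K == 0).
Proof. exact: zeta0. Qed.

Lemma assoc_euler_small nu mu N K : N < K -> assoc_euler nu mu N K = 0.
Proof. exact: zeta_small. Qed.

Lemma assoc_euler_cons nu mu N K : mu <= nu ->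
  assoc_euler nu mu N.+1 K =
  mu.+1 * assoc_euler nu.+1 mu N K
  + (if K is K'.+1 then (nu - mu) * assoc_euler nu.+1 mu.+1 N K' else 0).
Proof.
move=> le_mu_nu; rewrite /assoc_euler zeta_cons addn0 addn1.
congr (_ * _ + _); first by apply: eq_zeta => i; lia.
case: K => [|K] //; rewrite addnK; congr (_ * _).
by apply: eq_zeta => i; lia.
Qed.

Lemma assoc_euler_rcons nu mu N K :
  assoc_euler nu mu N.+1 K =
  (mu + K).+1 * assoc_euler nu mu N K
  + (if K is K'.+1 then (nu - mu + (N.+1 - K') - 1) * assoc_euler nu mu N K' else 0).
Proof. by rewrite /assoc_euler zeta_rcons addn1. Qed.

Lemma eulerS n m :
  euler n.+1 m = m.+1 * euler n m + (if m is m'.+1 then (n.+1 - m) * euler n m' else 0).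
Proof. by rewrite addnC; case: m. Qed.

Lemma euler_small n k : n < k -> euler n k = 0.
Proof. by elim: n k => [|n IHn] [|k] //= lt_nk; rewrite !IHn ?muln0 // ltnW. Qed.

(* The paper's <N, m - k>^(nu,k), which vanishes for m < k. *)
Definition assoc_euler_sub nu k N m :=
  if k <= m then assoc_euler nu k N (m - k) else 0.

Lemma assoc_eulerZ_sub nu k N m :
  assoc_eulerZ nu k N (m%:Z - k%:Z)%R = assoc_euler_sub nu k N m.
Proof.
rewrite /assoc_euler_sub; case: leqP => [le_km | lt_mk]; first by rewrite subzn.
have : (m%:Z - k%:Z < 0)%R by rewrite Num.Theory.subr_lt0 ltz_nat.
by case: (m%:Z - k%:Z)%R.
Qed.

Lemma assoc_euler_sub0 nu k m : assoc_euler_sub nu k 0 m = (k == m).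
Proof. by rewrite /assoc_euler_sub assoc_euler0; case: ltngtP => // *; lia. Qed.

Lemma assoc_euler_subS nu k N m : k <= nu ->
  assoc_euler_sub nu k N.+1 m =
  m.+1 * assoc_euler_sub nu k N m
  + (if m is m'.+1 then (nu + N.+1 - m) * assoc_euler_sub nu k N m' else 0).
Proof.
move=> le_k_nu; rewrite /assoc_euler_sub.
case: (leqP k m) => [le_km | lt_mk]; last first.
  by case: m lt_mk => [|m] lt_mk; rewrite ?muln0 // ifN ?muln0 // -ltnNge ltnW.
rewrite assoc_euler_rcons subnKC //.
case: m le_km => [|m] le_km; first by rewrite sub0n.
case: (leqP k m) => [le_km' | lt_mk]; last first.
  by rewrite (_ : m.+1 - k = 0) ?muln0 //; lia.
rewrite subSn //; case: (leqP (m - k) N) => [le_mk_N | lt_N_mk].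
  by congr (_ + _ * _); lia.
by rewrite (@assoc_euler_small _ _ N (m - k)) // !muln0.
Qed.

Lemma euler_convolution nu N m :
  euler (nu + N) m = \sum_(0 <= k < nu.+1) euler nu k * assoc_euler_sub nu k N m.
Proof.
elim: N m => [|N IHN] m.
  under eq_bigr do rewrite assoc_euler_sub0 mulnbr.
  rewrite addn0 -big_mkcond big_nat1_eq.
  by rewrite leq0n /=; case: ltnP => // /euler_small.
under eq_big_nat => k /andP[_ le_k_nu] do rewrite assoc_euler_subS //.
rewrite addnS eulerS IHN; case: m => [|m].
  by rewrite mul1n addn0; apply: eq_bigr => k _; rewrite mul1n addn0.
rewrite IHN !big_distrr -big_split /=; apply: eq_bigr => k _.
by rewrite mulnDr !(mulnCA (euler nu k)).
Qed.

Lemma euler_assoc_euler00 n m : euler n m = assoc_euler 0 0 n m.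
Proof.
by rewrite -[n]add0n euler_convolution big_nat1 mul1n /assoc_euler_sub subn0.
Qed.

(* Split each word at its first zero: the i ones before it have weight b_0 = 1
   and the zero itself has weight a_(i+1) = j + i. *)
Lemma assoc_euler_first_zero j N M :
  assoc_euler j 0 N M.+1 =
  \sum_(0 <= i < N) (j + i) * assoc_euler (j + i).+1 1 (N - i - 1) M.
Proof.
elim: N j => [|N IHN] j; first by rewrite big_geq // assoc_euler_small.
rewrite assoc_euler_cons // IHN big_nat_recl // addnC mul1n subn0 addn0 subn1.
congr (_ + _); apply: eq_bigr => i _.
by rewrite addSn addnS subSS.
Qed.

Lemma euler_sum_first_zero n m : 1 <= m <= n ->
  euler n m = \sum_(1 <= j < (n - m).+1) j * assoc_euler j.+1 1 (n - j - 1) (m - 1).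
Proof.
case: m => [|M] //; case: n => [|n] // /andP[_ le_M_n].
rewrite euler_assoc_euler00 assoc_euler_cons // mul1n subnn mul0n addn0.
rewrite assoc_euler_first_zero big_add1 /= subSS subn1 /=.
rewrite (@big_cat_nat _ _ _ (n - M)) ?leq_subr //=.
rewrite [X in _ + X = _]big_nat_cond [X in _ + X = _]big1 ?addn0.
  by apply: eq_big_nat => i _; rewrite add1n subSS.
move=> i /andP[/andP[lt_nM_i lt_i_n] _].
by rewrite assoc_euler_small ?muln0 //; lia.
Qed.

Theorem theorem6p4 :
  (forall n m : nat, 1 <= m <= n ->
     euler n m = \sum_(1 <= j < (n - m).+1) j * assoc_euler j.+1 1 (n - j - 1) (m - 1))
  /\
  (forall n m nu : nat, m <= n -> 1 <= nu <= n - 1 ->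
     euler n m = \sum_(0 <= k < nu.+1)
                   euler nu k * assoc_eulerZ nu k (n - nu) (m%:Z - k%:Z)%R).
Proof.
split; first exact: euler_sum_first_zero.
move=> n m nu _ /andP[_ le_nu_n].
rewrite -{1}(subnKC (leq_trans le_nu_n (leq_subr 1 n))) euler_convolution.
by apply: eq_bigr => k _; rewrite assoc_eulerZ_sub.
Qed.
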